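(* Let $\lambda$ be an infinite cardinal and let $G$ be a graph on vertex set $\lambda^+$ with chromatic number $\lambda^+$. Then there is a function $f:\lambda^+\to\lambda^+$ such that for every closed unbounded set $C\subseteq\lambda^+$, the subgraph of $G$ induced on $\bigcup\{[\alpha,f(\alpha)]:\alpha\in C\}$ has chromatic number $\lambda^+$.
   Context: $[\alpha,\beta]$ denotes the interval of ordinals $\{\gamma:\alpha\le\gamma\le\beta\}$ (empty if $\beta<\alpha$). *)

From Stdlib Require Import Relations Wellfounded.

Set Implicit Arguments.

Definition injective {A B : Type} (f : A -> B) : Prop :=
  forall x y, f x = f y -> x = y.

Definition card_le (A B : Type) : Prop := exists f : A -> B, injective f.
Definition card_lt (A B : Type) : Prop := card_le A B /\ ~ card_le B A.

Definition infinite_type (L : Type) : Prop := card_le nat L.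

Record well_order (T : Type) (lt : T -> T -> Prop) : Prop := {
  wo_wf    : well_founded lt;
  wo_trans : forall a b c, lt a b -> lt b c -> lt a c;
  wo_total : forall a b, lt a b \/ a = b \/ lt b a
}.

Definition le_of {T : Type} (lt : T -> T -> Prop) (a b : T) : Prop :=
  lt a b \/ a = b.

(* (T, lt) has order type lambda^+ where lambda = |L|: every proper initial
   segment has cardinality <= |L|, but T itself does not. *)
Definition is_succ_cardinal_of (L T : Type) (lt : T -> T -> Prop) : Prop :=
  well_order lt /\
  (forall a : T, card_le {x : T | lt x a} L) /\
  ~ card_le T L.

Definition simple_graph {V : Type} (E : V -> V -> Prop) : Prop :=
  (forall x y, E x y -> E y x) /\ (forall x, ~ E x x).

Definition colorable {V : Type} (E : V -> V -> Prop) (K : Type) : Prop :=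
  exists c : V -> K, forall x y, E x y -> c x <> c y.

Definition chromatic_number_is {V : Type} (E : V -> V -> Prop) (K : Type) : Prop :=
  colorable E K /\ forall K' : Type, card_lt K' K -> ~ colorable E K'.

Definition induced {V : Type} (E : V -> V -> Prop) (S : V -> Prop)
  : {x : V | S x} -> {x : V | S x} -> Prop :=
  fun x y => E (proj1_sig x) (proj1_sig y).

Definition unbounded {T : Type} (lt : T -> T -> Prop) (C : T -> Prop) : Prop :=
  forall a, exists c, C c /\ lt a c.

(* Closed: whenever C is cofinal below a nonzero alpha (i.e. alpha is a limit
   point of C), alpha belongs to C. *)
Definition closed_set {T : Type} (lt : T -> T -> Prop) (C : T -> Prop) : Prop :=
  forall alpha,
    (exists g, C g /\ lt g alpha) ->
    (forall b, lt b alpha -> exists g, C g /\ lt b g /\ lt g alpha) ->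
    C alpha.

Definition club {T : Type} (lt : T -> T -> Prop) (C : T -> Prop) : Prop :=
  closed_set lt C /\ unbounded lt C.

Definition interval_union {T : Type} (lt : T -> T -> Prop) (f : T -> T)
  (C : T -> Prop) : T -> Prop :=
  fun g => exists alpha, C alpha /\ le_of lt alpha g /\ le_of lt g (f alpha).

From Stdlib Require Import Cantor ClassicalEpsilon Wellfounded List Lia FinFun Classical.
From Stdlib Require Import FunctionalExtensionality.

(* Suppose not. Then every f : T -> T has a club C_f on whose interval union G can be
   coloured with colours from an initial segment of T. Put E_0 = T and
   E_(n+1) = E_n /\ C_(f_n), where f_n sends a to the next point of E_n above a. The
   intersection D of the E_n is club, and every vertex v lies below min D or in one of
   the interval unions of the f_n: if al is the largest point of D below v, then
   v <= f_n(al) for some n, since otherwise sup_n f_n(al) would be a larger point of D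
   below v. As lambda^+ has uncountable cofinality, these countably many colourings,
   together with the identity below min D, take colours in nat * [0, b) for a single b,
   and [0, b) absorbs this product; so G is coloured with |[0, b)| <= lambda colours. *)

Set Implicit Arguments.

Definition eps {A : Type} (a : A) (P : A -> Prop) : A := epsilon (inhabits a) P.

Lemma eps_spec {A : Type} (a : A) (P : A -> Prop) : (exists x, P x) -> P (eps a P).
Proof. exact (epsilon_spec (inhabits a) P). Qed.

Lemma proj1_sig_inj {A : Type} {P : A -> Prop} (u v : {x | P x}) :
  proj1_sig u = proj1_sig v -> u = v.
Proof. destruct u as [x p], v as [y q]; simpl; intros ->. f_equal. apply proof_irrelevance. Qed.

Lemma nat_least (P : nat -> Prop) n : P n -> exists m, P m /\ forall i, i < m -> ~ P i.
Proof.
  induction n as [n IH] using (well_founded_ind PeanoNat.Nat.lt_wf_0). intros Pn.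
  destruct (classic (exists i, i < n /\ P i)) as [[i [Hi Pi]]|N].
  - exact (IH i Hi Pi).
  - exists n; split; auto. intros i Hi Pi. apply N; eauto.
Qed.

Lemma bounded_nat_fun_not_injective (g : nat -> nat) K :
  (forall n, g n <= K) -> ~ injective g.
Proof.
  intros Hb Hi.
  assert (H : length (map g (seq 0 (S (S K)))) <= length (seq 0 (S K))).
  { apply NoDup_incl_length.
    - apply Injective_map_NoDup; [exact Hi | apply seq_NoDup].
    - intros x Hx. apply in_map_iff in Hx. destruct Hx as [y [<- _]].
      apply in_seq. specialize (Hb y). lia. }
  rewrite length_map, !length_seq in H. lia.
Qed.

Section WellOrder.
Variables (W : Type) (R : W -> W -> Prop).
Hypothesis HW : well_order R.

Lemma wo_irrefl x : ~ R x x.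
Proof.
  induction x as [x IH] using (well_founded_ind (wo_wf HW)).
  intros H. exact (IH x H H).
Qed.

Lemma wo_le_lt_trans {x y z} : le_of R x y -> R y z -> R x z.
Proof. intros [H | ->] H2; [exact (wo_trans HW _ _ _ H H2) | exact H2]. Qed.

Lemma wo_lt_le_trans {x y z} : R x y -> le_of R y z -> R x z.
Proof. intros H [H2 | <-]; [exact (wo_trans HW _ _ _ H H2) | exact H]. Qed.

Lemma wo_le_of_not_lt {x y} : ~ R x y -> le_of R y x.
Proof.
  intros H. destruct (wo_total HW x y) as [h|[h|h]]; [contradiction | right; auto | left; auto].
Qed.

Lemma wo_not_lt_of_le {x y} : le_of R x y -> ~ R y x.
Proof. intros H H2. exact (wo_irrefl (wo_le_lt_trans H H2)). Qed.

Lemma wo_least (P : W -> Prop) :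
  (exists x, P x) -> exists x, P x /\ forall y, P y -> le_of R x y.
Proof.
  intros [x Px]. revert Px. induction x as [x IH] using (well_founded_ind (wo_wf HW)).
  intros Px. destruct (classic (exists y, P y /\ R y x)) as [[y [Py Ryx]]|N].
  - exact (IH y Ryx Py).
  - exists x. split; auto. intros y Py. apply wo_le_of_not_lt. intros h. apply N; eauto.
Qed.

Definition least (a : W) (P : W -> Prop) : W :=
  eps a (fun x => P x /\ forall y, P y -> le_of R x y).

Lemma least_spec a P :
  (exists x, P x) -> P (least a P) /\ forall y, P y -> le_of R (least a P) y.
Proof. intros H. unfold least. apply eps_spec, wo_least, H. Qed.

Definition is_sup (S : W -> Prop) (s : W) : Prop :=
  (forall x, S x -> le_of R x s) /\
  (forall u, (forall x, S x -> le_of R x u) -> le_of R s u).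

Lemma is_sup_exists S u : (forall x, S x -> le_of R x u) -> exists s, is_sup S s.
Proof.
  intros Hu. destruct (wo_least (fun y => forall x, S x -> le_of R x y)) as [s [Hs Hmin]].
  - exists u; exact Hu.
  - exists s; split; [exact Hs | exact Hmin].
Qed.

Lemma is_sup_cofinal_subset S S' s :
  (forall y, S' y -> S y) -> (forall x, S x -> exists y, S' y /\ le_of R x y) ->
  is_sup S s -> is_sup S' s.
Proof.
  intros Hsub Hcof [Hub Hmin]. split.
  - intros y Sy. exact (Hub y (Hsub y Sy)).
  - intros u Hu. apply Hmin. intros x Sx. destruct (Hcof x Sx) as [y [Sy Hxy]].
    destruct Hxy as [Hxy | <-]; [|exact (Hu x Sy)].
    left. exact (wo_lt_le_trans Hxy (Hu y Sy)).
Qed.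

(* A supremum not attained in S is a limit point of S. *)
Lemma closed_is_sup C S s :
  closed_set R C -> (forall x, S x -> C x) -> (exists x, S x) -> is_sup S s -> C s.
Proof.
  intros HC HSC [x0 Sx0] [Hub Hmin].
  destruct (classic (S s)) as [Ss|NSs]; [exact (HSC s Ss)|].
  assert (Hlt : forall x, S x -> R x s).
  { intros x Sx. destruct (Hub x Sx) as [h | <-]; [exact h | contradiction]. }
  apply HC.
  - exists x0. auto.
  - intros b hb. destruct (classic (exists x, S x /\ R b x)) as [[x [Sx hx]]|N].
    + exists x. auto.
    + exfalso. refine (wo_not_lt_of_le (Hmin b _) hb).
      intros x Sx. apply wo_le_of_not_lt. intros h. apply N; eauto.
Qed.

Definition next_in (C : W -> Prop) (a : W) : W := least a (fun z => C z /\ R a z).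

Lemma next_in_spec C a :
  unbounded R C ->
  C (next_in C a) /\ R a (next_in C a) /\
  forall w, C w -> R a w -> le_of R (next_in C a) w.
Proof.
  intros HU. destruct (least_spec a (fun z => C z /\ R a z)) as [[H1 H2] H3].
  - exact (HU a).
  - refine (conj H1 (conj H2 _)). intros w Cw Hw. exact (H3 w (conj Cw Hw)).
Qed.

End WellOrder.

Section Absorption.
Variables (W : Type) (R : W -> W -> Prop).
Hypothesis HW : well_order R.

Definition has_succ (x : W) : Prop := exists y, R x y.
Definition succ (x : W) : W := least R x (R x).

(* Limit points include the least element, so every x is uniquely l + k with l a
   limit and k finite. *)
Definition is_limit (l : W) : Prop := forall y, R y l -> exists z, R y z /\ R z l.
Definition succ_defined (l : W) (k : nat) : Prop :=
  forall i, i < k -> has_succ (Nat.iter i succ l).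
Definition infinite_block (l : W) : Prop := forall i, has_succ (Nat.iter i succ l).

Lemma succ_spec {x} : has_succ x -> R x (succ x) /\ forall z, R x z -> le_of R (succ x) z.
Proof. intros H. exact (least_spec HW x (R x) H). Qed.

Lemma succ_inj {a b} : has_succ a -> has_succ b -> succ a = succ b -> a = b.
Proof.
  intros Ha Hb E. destruct (succ_spec Ha) as [A1 A2], (succ_spec Hb) as [B1 B2].
  destruct (wo_total HW a b) as [h|[h|h]]; auto; exfalso.
  - pose proof (A2 b h) as h2. rewrite E in h2. exact (wo_not_lt_of_le HW h2 B1).
  - pose proof (B2 a h) as h2. rewrite <- E in h2. exact (wo_not_lt_of_le HW h2 A1).
Qed.

Lemma succ_not_limit {y} : has_succ y -> ~ is_limit (succ y).
Proof.
  intros H Hl. destruct (succ_spec H) as [A1 A2]. destruct (Hl y A1) as [z [z1 z2]].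
  exact (wo_not_lt_of_le HW (A2 z z1) z2).
Qed.

Lemma limit_decomposition x :
  exists l k, is_limit l /\ succ_defined l k /\ Nat.iter k succ l = x.
Proof.
  induction x as [x IH] using (well_founded_ind (wo_wf HW)).
  destruct (classic (is_limit x)) as [Hl|Hnl].
  - exists x, 0. repeat split; auto. intros i Hi; lia.
  - apply not_all_ex_not in Hnl. destruct Hnl as [y Hy].
    apply imply_to_and in Hy. destruct Hy as [Ryx Hnz].
    assert (Hy : has_succ y) by (exists x; exact Ryx).
    assert (Es : succ y = x).
    { destruct (succ_spec Hy) as [Hys Hmin].
      destruct (Hmin x Ryx) as [h|h]; auto. exfalso; apply Hnz; eauto. }
    destruct (IH y Ryx) as [l [k [Hl [Hk Ey]]]].
    exists l, (S k). repeat split; auto.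
    + intros i Hi. destruct (PeanoNat.Nat.eq_dec i k) as [->|ne].
      * rewrite Ey; exact Hy.
      * apply Hk; lia.
    + simpl. rewrite Ey. exact Es.
Qed.

Lemma limit_decomposition_unique k : forall l k' l',
  is_limit l -> is_limit l' -> succ_defined l k -> succ_defined l' k' ->
  Nat.iter k succ l = Nat.iter k' succ l' -> l = l' /\ k = k'.
Proof.
  induction k as [|k IH]; intros l [|k'] l' Hl Hl' Hk Hk' E; simpl in E.
  - auto.
  - exfalso. subst l. exact (succ_not_limit (Hk' k' (PeanoNat.Nat.lt_succ_diag_r _)) Hl).
  - exfalso. rewrite <- E in Hl'. exact (succ_not_limit (Hk k (PeanoNat.Nat.lt_succ_diag_r _)) Hl').
  - apply succ_inj in E; [|apply Hk; lia | apply Hk'; lia].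
    destruct (IH l k' l' Hl Hl') as [-> ->]; auto.
    + intros i Hi; apply Hk; lia.
    + intros i Hi; apply Hk'; lia.
Qed.

(* A finite block ends at the maximum of W, so there is at most one. *)
Lemma finite_block_unique l l' :
  is_limit l -> is_limit l' -> ~ infinite_block l -> ~ infinite_block l' -> l = l'.
Proof.
  intros Hl Hl' Hf Hf'.
  apply not_all_ex_not in Hf. destruct Hf as [k Hk].
  destruct (nat_least (fun k => ~ has_succ (Nat.iter k succ l)) _ Hk) as [k0 [H0 M0]].
  apply not_all_ex_not in Hf'. destruct Hf' as [k' Hk'].
  destruct (nat_least (fun k => ~ has_succ (Nat.iter k succ l')) _ Hk') as [k1 [H1 M1]].
  assert (E : Nat.iter k0 succ l = Nat.iter k1 succ l').
  { destruct (wo_total HW (Nat.iter k0 succ l) (Nat.iter k1 succ l')) as [h|[h|h]];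
      auto; exfalso; [apply H0 | apply H1]; eexists; exact h. }
  apply (@limit_decomposition_unique k0 l k1 l'); auto.
  - intros i Hi. apply NNPP, M0, Hi.
  - intros i Hi. apply NNPP, M1, Hi.
Qed.

Definition decompose (x : W) : W * nat :=
  eps (x, 0) (fun p => is_limit (fst p) /\ succ_defined (fst p) (snd p) /\
                       Nat.iter (snd p) succ (fst p) = x).

Lemma decompose_spec x :
  is_limit (fst (decompose x)) /\ succ_defined (fst (decompose x)) (snd (decompose x)) /\
  Nat.iter (snd (decompose x)) succ (fst (decompose x)) = x.
Proof.
  unfold decompose. apply eps_spec.
  destruct (limit_decomposition x) as [l [k H]]. exists (l, k). exact H.
Qed.

Hypothesis Winf : exists j : nat -> W, injective j.

Lemma exists_infinite_block : exists l, is_limit l /\ infinite_block l.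
Proof.
  destruct Winf as [j Hj]. apply NNPP. intros N.
  assert (Hfin : forall x, ~ infinite_block (fst (decompose x))).
  { intros x I. apply N. exists (fst (decompose x)). split; [apply decompose_spec | exact I]. }
  set (l := fst (decompose (j 0))).
  assert (Hl : forall n, fst (decompose (j n)) = l).
  { intros n. apply finite_block_unique; try apply decompose_spec; apply Hfin. }
  pose proof (Hfin (j 0)) as Hk. apply not_all_ex_not in Hk. destruct Hk as [k Hk].
  destruct (nat_least (fun k => ~ has_succ (Nat.iter k succ l)) _ Hk) as [K [HK _]].
  apply (@bounded_nat_fun_not_injective (fun n => snd (decompose (j n))) K).
  - intros n. destruct (decompose_spec (j n)) as [_ [Hn _]]. rewrite Hl in Hn.
    destruct (Compare_dec.le_lt_dec (snd (decompose (j n))) K) as [h|h]; auto.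
    exfalso. exact (HK (Hn K h)).
  - intros n m E. apply Hj.
    destruct (decompose_spec (j n)) as [_ [_ <-]], (decompose_spec (j m)) as [_ [_ <-]].
    rewrite !Hl, E. reflexivity.
Qed.

(* Inside an infinite block l the point l + 2 <n, k> codes (n, l + k); points of the
   (unique) finite block are sent to odd offsets of a fixed infinite block l0. *)
Lemma nat_prod_absorb : exists phi : nat * W -> W, injective phi.
Proof.
  destruct exists_infinite_block as [l0 [L0 I0]].
  exists (fun p => let x := snd p in
    if excluded_middle_informative (infinite_block (fst (decompose x)))
    then Nat.iter (2 * to_nat (fst p, snd (decompose x))) succ (fst (decompose x))
    else Nat.iter (S (2 * to_nat (fst p, snd (decompose x)))) succ l0).
  intros [n x] [m y]. cbv beta zeta. cbn [fst snd].
  destruct (decompose_spec x) as [Lx [Cx Ex]], (decompose_spec y) as [Ly [Cy Ey]].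
  destruct (excluded_middle_informative (infinite_block (fst (decompose x)))) as [Ix|Ix];
  destruct (excluded_middle_informative (infinite_block (fst (decompose y)))) as [Iy|Iy];
  intros E; apply limit_decomposition_unique in E; auto; try (intros i _; auto);
  destruct E as [E1 E2].
  - assert (P : (n, snd (decompose x)) = (m, snd (decompose y))) by (apply to_nat_inj; lia).
    injection P as -> P. rewrite <- Ex, <- Ey, E1, P. reflexivity.
  - lia.
  - lia.
  - assert (P : (n, snd (decompose x)) = (m, snd (decompose y))) by (apply to_nat_inj; lia).
    injection P as -> P. rewrite <- Ex, <- Ey, P, (finite_block_unique Lx Ly Ix Iy). reflexivity.
Qed.

End Absorption.

Lemma well_order_pullback {A B : Type} {R : B -> B -> Prop} (g : A -> B) :
  well_order R -> injective g -> well_order (fun x y => R (g x) (g y)).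
Proof.
  intros HW Hg. constructor.
  - apply wf_inverse_image. exact (wo_wf HW).
  - intros a b c h1 h2. exact (wo_trans HW _ _ _ h1 h2).
  - intros a b. destruct (wo_total HW (g a) (g b)) as [h|[h|h]]; auto.
Qed.

Definition sum_nat_lt {T : Type} (lt : T -> T -> Prop) (u v : T + nat) : Prop :=
  match u, v with
  | inl a, inl b => lt a b
  | inl _, inr _ => True
  | inr _, inl _ => False
  | inr n, inr m => n < m
  end.

Lemma sum_nat_well_order {T : Type} {lt : T -> T -> Prop} :
  well_order lt -> well_order (sum_nat_lt lt).
Proof.
  intros HW.
  assert (AL : forall a, Acc (sum_nat_lt lt) (inl a)).
  { intros a. induction a as [a IH] using (well_founded_ind (wo_wf HW)).
    constructor. intros [b|n] h; simpl in h; [apply IH; exact h | contradiction]. }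
  constructor.
  - intros [a|n]; [apply AL|].
    induction n as [n IH] using (well_founded_ind PeanoNat.Nat.lt_wf_0).
    constructor. intros [b|m] h; [apply AL | apply IH; exact h].
  - intros [a|n] [b|m] [c|k]; simpl; try tauto; try lia. apply (wo_trans HW).
  - intros [a|n] [b|m]; simpl; auto.
    + destruct (wo_total HW a b) as [h|[h|h]]; subst; auto.
    + destruct (PeanoNat.Nat.lt_trichotomy n m) as [h|[h|h]]; subst; auto.
Qed.

Section Rank.
Variables (W : Type) (R : W -> W -> Prop).
Hypothesis HW : well_order R.

(* Restricted to X, rank X is the order isomorphism of X onto an initial segment. *)
Definition rank (X : W -> Prop) : W -> W :=
  Fix (wo_wf HW) (fun _ => W)
    (fun t rec => least R t (fun s => forall t' (H : R t' t), X t' -> R (rec t' H) s)).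

Lemma rank_eq X t :
  rank X t = least R t (fun s => forall t', R t' t -> X t' -> R (rank X t') s).
Proof.
  unfold rank at 1. rewrite Fix_eq; [reflexivity|].
  intros x f g H. replace g with f; [reflexivity|].
  apply functional_extensionality_dep. intros y. apply functional_extensionality. intros p. apply H.
Qed.

Lemma rank_spec X t :
  (forall t', R t' t -> X t' -> R (rank X t') (rank X t)) /\
  (forall s, (forall t', R t' t -> X t' -> R (rank X t') s) -> le_of R (rank X t) s) /\
  le_of R (rank X t) t.
Proof.
  induction t as [t IH] using (well_founded_ind (wo_wf HW)).
  assert (Ht : forall t', R t' t -> X t' -> R (rank X t') t).
  { intros t' h _. exact (wo_le_lt_trans HW (proj2 (proj2 (IH t' h))) h). }
  destruct (least_spec HW t (fun s => forall t', R t' t -> X t' -> R (rank X t') s)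
    (ex_intro _ t Ht)) as [S1 S2].
  rewrite <- rank_eq in S1, S2. auto.
Qed.

End Rank.

Section SuccessorCardinal.
Variables (L T : Type) (lt : T -> T -> Prop).
Hypotheses (Hinf : infinite_type L) (HS : is_succ_cardinal_of L lt).
Let HW : well_order lt := proj1 HS.

(* The part of L used by h, together with a copy of nat, injects into T + nat and is
   therefore well-ordered and infinite; it absorbs the factor nat, so T injects into L. *)
Lemma not_injective_into_nat_prod (h : T -> nat * L) : ~ injective h.
Proof.
  intros Hh. destruct Hinf as [j Hj].
  set (P := fun y : L => (exists x, snd (h x) = y) \/ (exists n, j n = y)).
  assert (Hsrc : forall w : {y : L | P y}, exists t : T + nat,
    match t with inl x => snd (h x) = proj1_sig w | inr n => j n = proj1_sig w end).
  { intros [y [[x Hx]|[n Hn]]]; [exists (inl x) | exists (inr n)]; assumption. }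
  destruct (choice _ Hsrc) as [g Hg].
  assert (Hginj : injective g).
  { intros w1 w2 E. apply proj1_sig_inj. pose proof (Hg w1) as H1. pose proof (Hg w2) as H2.
    rewrite E in H1. destruct (g w2); congruence. }
  set (jP := fun n => exist P (j n) (or_intror (ex_intro _ n eq_refl))).
  assert (HjP : injective jP).
  { intros a b E. apply Hj. exact (f_equal (@proj1_sig _ _) E). }
  destruct (nat_prod_absorb (well_order_pullback (sum_nat_well_order HW) Hginj)
              (ex_intro _ jP HjP)) as [phi Hphi].
  apply (proj2 (proj2 HS)).
  exists (fun x =>
    proj1_sig (phi (fst (h x), exist P (snd (h x)) (or_introl (ex_intro _ x eq_refl))))).
  intros x y E. apply proj1_sig_inj, Hphi in E. apply Hh.
  injection E as E1 E2. destruct (h x), (h y); simpl in *; congruence.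
Qed.

Lemma segment_codes :
  exists code : T -> T -> L, forall a x y, lt x a -> lt y a -> code a x = code a y -> x = y.
Proof.
  destruct Hinf as [j _].
  assert (ii : forall a, {f : {x | lt x a} -> L | injective f}).
  { intros a. apply constructive_indefinite_description, (proj1 (proj2 HS)). }
  exists (fun a x => match excluded_middle_informative (lt x a) with
                     | left p => proj1_sig (ii a) (exist _ x p)
                     | right _ => j 0
                     end).
  intros a x y hx hy.
  destruct (excluded_middle_informative (lt x a)) as [p|]; [|contradiction].
  destruct (excluded_middle_informative (lt y a)) as [q|]; [|contradiction].
  intros E. apply (proj2_sig (ii a)) in E. exact (f_equal (@proj1_sig _ _) E).
Qed.

Lemma succ_cardinal_no_max x : exists y, lt x y.
Proof.
  apply NNPP. intros Hmax.
  destruct Hinf as [j _]. destruct segment_codes as [code Hcode].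
  assert (Hlt : forall y, y <> x -> lt y x).
  { intros y ne. destruct (wo_total HW y x) as [h|[h|h]]; [exact h | contradiction | ].
    exfalso; eauto. }
  apply (@not_injective_into_nat_prod
    (fun y => if excluded_middle_informative (y = x) then (1, j 0) else (0, code x y))).
  intros y z.
  destruct (excluded_middle_informative (y = x)) as [ey|ey];
  destruct (excluded_middle_informative (z = x)) as [ez|ez]; intros E; try congruence.
  injection E as E. exact (Hcode x y z (Hlt y ey) (Hlt z ez) E).
Qed.

Lemma succ_cardinal_bounded_seq (a : nat -> T) : exists b, forall n, lt (a n) b.
Proof.
  assert (Hle : exists b, forall n, le_of lt (a n) b).
  { apply NNPP. intros N.
    destruct segment_codes as [code Hcode].
    assert (U : forall x, exists n, lt x (a n)).
    { intros x. apply NNPP. intros M. apply N. exists x. intros n.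
      apply (wo_le_of_not_lt HW). intros h. apply M; eauto. }
    destruct (choice _ U) as [nx Hnx].
    apply (@not_injective_into_nat_prod (fun x => (nx x, code (a (nx x)) x))).
    intros x y E. injection E as E1 E2. rewrite E1 in E2.
    apply (Hcode (a (nx y)) x y); [rewrite <- E1; apply Hnx | apply Hnx | exact E2]. }
  destruct Hle as [b Hb]. destruct (succ_cardinal_no_max b) as [b' Hb'].
  exists b'. intros n. exact (wo_le_lt_trans HW (Hb n) Hb').
Qed.

Lemma succ_cardinal_inhabited : inhabited T.
Proof.
  apply NNPP. intros N. apply (proj2 (proj2 HS)).
  exists (fun x => match N (inhabits x) with end). intros x. exfalso; eauto using inhabits.
Qed.

Lemma segment_card_lt b : card_lt {x | lt x b} T.
Proof.
  split.
  - exists (@proj1_sig T _). intros u v; apply proj1_sig_inj.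
  - intros [f Hf]. apply (proj2 (proj2 HS)). destruct (proj1 (proj2 HS) b) as [g Hg].
    exists (fun x => g (f x)). intros x y h. apply Hf, Hg, h.
Qed.

Lemma segment_nat_prod_absorb a :
  exists b, lt a b /\ exists phi : nat * {x | lt x b} -> {x | lt x b}, injective phi.
Proof.
  destruct (choice _ succ_cardinal_no_max) as [nx Hnx].
  set (s := fun n => Nat.iter n nx a).
  assert (Ms : forall n m, n < m -> lt (s n) (s m)).
  { intros n m H. induction H.
    - apply Hnx.
    - exact (wo_trans HW _ _ _ IHle (Hnx _)). }
  destruct (succ_cardinal_bounded_seq s) as [b Hb].
  exists b. split; [exact (Hb 0)|].
  set (j := fun n => exist (fun x => lt x b) (s n) (Hb n)).
  assert (Hj : injective j).
  { intros n m E. apply (f_equal (@proj1_sig _ _)) in E. simpl in E.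
    destruct (PeanoNat.Nat.lt_trichotomy n m) as [h|[h|h]]; auto; exfalso;
      apply Ms in h; rewrite E in h; exact (wo_irrefl HW _ h). }
  assert (Hp : injective (@proj1_sig T (fun x => lt x b))) by (intros u v; apply proj1_sig_inj).
  exact (nat_prod_absorb (well_order_pullback HW Hp) (ex_intro _ j Hj)).
Qed.

Lemma card_lt_in_segment (K : Type) : card_lt K T -> exists a, card_le K {x | lt x a}.
Proof.
  intros [[e He] HTK].
  set (X := fun t => exists k, e k = t).
  assert (Hrank_inj : forall x y, X x -> X y -> rank HW X x = rank HW X y -> x = y).
  { intros x y Hx Hy E. destruct (wo_total HW x y) as [h|[h|h]]; auto; exfalso.
    - pose proof (proj1 (rank_spec HW X y) x h Hx) as A. rewrite E in A. exact (wo_irrefl HW _ A).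
    - pose proof (proj1 (rank_spec HW X x) y h Hy) as A. rewrite E in A. exact (wo_irrefl HW _ A). }
  destruct (classic (exists a, forall x, X x -> lt (rank HW X x) a)) as [[a Ha]|Hunb].
  - exists a, (fun k => exist (fun x => lt x a) (rank HW X (e k)) (Ha _ (ex_intro _ k eq_refl))).
    intros k1 k2 E. apply (f_equal (@proj1_sig _ _)) in E.
    apply He, Hrank_inj; [exists k1 | exists k2 | ]; auto.
  - exfalso. apply HTK.
    (* Unbounded ranks take every value, since they form an initial segment. *)
    assert (Hk : forall s, exists k, rank HW X (e k) = s).
    { intros s.
      assert (Hex : exists x, X x /\ le_of lt s (rank HW X x)).
      { apply NNPP. intros M. apply Hunb. exists s. intros x Hx. apply NNPP. intros h.
        apply M. exists x. split; [exact Hx | exact (wo_le_of_not_lt HW h)]. }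
      destruct (wo_least HW _ Hex) as [x [[[k <-] Hsx] Hmin]].
      exists k. destruct Hsx as [Hsx | <-]; [exfalso | reflexivity].
      refine (wo_not_lt_of_le HW (proj1 (proj2 (rank_spec HW X (e k))) s _) Hsx).
      intros t' Ht' Xt'. apply NNPP. intros h.
      exact (wo_not_lt_of_le HW (Hmin t' (conj Xt' (wo_le_of_not_lt HW h))) Ht'). }
    destruct (choice _ Hk) as [ks Hks].
    exists ks. intros s1 s2 E. rewrite <- (Hks s1), <- (Hks s2), E. reflexivity.
Qed.

Lemma club_ext (P Q : T -> Prop) : (forall x, P x <-> Q x) -> club lt P -> club lt Q.
Proof.
  intros H [Hc Hu]. split.
  - intros a [g [Qg hg]] hc. apply H, Hc.
    + exists g. split; [apply H |]; auto.
    + intros b hb. destruct (hc b hb) as [g' [Q' h']]. exists g'. split; [apply H |]; auto.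
  - intros a. destruct (Hu a) as [c [Pc hc]]. exists c. split; [apply H |]; auto.
Qed.

(* x_(k+1) is the next point of Cs (fst (of_nat k)) above x_k, so each Cs n is met
   cofinally often below the supremum of the x_k. *)
Lemma club_inter (Cs : nat -> T -> Prop) :
  (forall n, club lt (Cs n)) -> club lt (fun x => forall n, Cs n x).
Proof.
  intros HC. split.
  - intros alpha [g [Hg hg]] Hcof n. apply (proj1 (HC n)).
    + exists g; auto.
    + intros b hb. destruct (Hcof b hb) as [g' [H' h']]. exists g'; auto.
  - intros a.
    set (x := nat_rect (fun _ => T) a (fun k y => next_in lt (Cs (fst (of_nat k))) y)).
    assert (Sx : forall k, Cs (fst (of_nat k)) (x (S k)) /\ lt (x k) (x (S k))).
    { intros k. destruct (next_in_spec HW (x k) (proj2 (HC (fst (of_nat k))))) as [H1 [H2 _]].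
      split; assumption. }
    assert (Mx : forall i j, i <= j -> le_of lt (x i) (x j)).
    { intros i j H. induction H; [right; reflexivity|].
      left. exact (wo_le_lt_trans HW IHle (proj2 (Sx m))). }
    destruct (succ_cardinal_bounded_seq x) as [b Hb].
    destruct (is_sup_exists HW (fun y => exists k, y = x k) (u := b)) as [s Hs].
    { intros y [k ->]. left; apply Hb. }
    exists s. split.
    + intros n.
      apply (closed_is_sup HW (proj1 (HC n))
               (S := fun y => exists k, fst (of_nat k) = n /\ y = x (S k))).
      * intros y [k [<- ->]]. apply Sx.
      * exists (x (S (to_nat (n, 0)))), (to_nat (n, 0)). rewrite cancel_of_to. auto.
      * apply (is_sup_cofinal_subset HW (S := fun y => exists k, y = x k)); [| | exact Hs].
        -- intros y [k [_ ->]]. eauto.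
        -- intros y [k ->]. exists (x (S (to_nat (n, k)))). split.
           ++ exists (to_nat (n, k)). rewrite cancel_of_to. auto.
           ++ apply Mx. pose proof (to_nat_non_decreasing n k). lia.
    + apply (wo_lt_le_trans HW (proj2 (Sx 0))). apply (proj1 Hs). exists 1. reflexivity.
Qed.

Section ClubChain.
Variable Cf : (T -> T) -> T -> Prop.
Hypothesis HCf : forall f, club lt (Cf f).

Fixpoint club_chain (n : nat) : T -> Prop :=
  match n with
  | 0 => fun _ => True
  | S n => fun x => club_chain n x /\ Cf (next_in lt (club_chain n)) x
  end.

Definition chain_piece (n : nat) : T -> Prop :=
  interval_union lt (next_in lt (club_chain n)) (Cf (next_in lt (club_chain n))).

Lemma club_chain_antitone {m n x} : m <= n -> club_chain n x -> club_chain m x.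
Proof. intros H. induction H; auto. intros h. apply IHle. exact (proj1 h). Qed.

Lemma club_chain_club n : club lt (club_chain n).
Proof.
  induction n as [|n IH].
  - split; [intros a _ _; exact I |].
    intros a. destruct (succ_cardinal_no_max a) as [c Hc]. exists c. split; [exact I | exact Hc].
  - apply (club_ext (P := fun x => forall k, match k with 0 => club_chain n x
                                            | S _ => Cf (next_in lt (club_chain n)) x end)).
    + intros x. split; [intros H; exact (conj (H 0) (H 1)) | intros [H0 H1] [|k]; assumption].
    + apply club_inter. intros [|k]; [exact IH | apply HCf].
Qed.

Lemma club_chain_next_le a m n :
  m <= n -> le_of lt (next_in lt (club_chain m) a) (next_in lt (club_chain n) a).
Proof.
  intros H. destruct (next_in_spec HW a (proj2 (club_chain_club n))) as [H1 [H2 _]].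
  destruct (next_in_spec HW a (proj2 (club_chain_club m))) as [_ [_ H3]].
  exact (H3 _ (club_chain_antitone H H1) H2).
Qed.

Lemma club_chain_next_sup a s :
  is_sup lt (fun y => exists n, y = next_in lt (club_chain n) a) s -> forall m, club_chain m s.
Proof.
  intros Hs m.
  apply (closed_is_sup HW (proj1 (club_chain_club m))
           (S := fun y => exists n, m <= n /\ y = next_in lt (club_chain n) a)).
  - intros y [n [Hn ->]]. apply (club_chain_antitone Hn).
    apply (next_in_spec HW a (proj2 (club_chain_club n))).
  - exists (next_in lt (club_chain m) a), m. auto.
  - apply (is_sup_cofinal_subset HW (S := fun y => exists n, y = next_in lt (club_chain n) a));
      [| | exact Hs].
    + intros y [n [_ ->]]. eauto.
    + intros y [n ->]. exists (next_in lt (club_chain (Nat.max m n)) a). split.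
      * exists (Nat.max m n). split; [lia | reflexivity].
      * apply club_chain_next_le. lia.
Qed.

Lemma club_chain_cover : exists d, forall v, lt v d \/ exists n, chain_piece n v.
Proof.
  destruct (club_inter _ club_chain_club) as [HDcl HDub].
  destruct succ_cardinal_inhabited as [t0].
  destruct (HDub t0) as [d [Dd _]].
  exists d. intros v. destruct (classic (lt v d)) as [Hvd|Hvd]; [left; exact Hvd | right].
  destruct (is_sup_exists HW (fun y => (forall n, club_chain n y) /\ le_of lt y v) (u := v))
    as [al Hal].
  { intros y [_ Hy]. exact Hy. }
  assert (Dal : forall n, club_chain n al).
  { refine (closed_is_sup HW HDcl _ _ Hal); [intros y [Hy _]; exact Hy |].
    exists d. split; [exact Dd | exact (wo_le_of_not_lt HW Hvd)]. }
  assert (Halv : le_of lt al v) by (apply (proj2 Hal); intros y [_ Hy]; exact Hy).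
  assert (Hn : exists n, le_of lt v (next_in lt (club_chain n) al)).
  { apply NNPP. intros N.
    assert (Hbound : forall y, (exists n, y = next_in lt (club_chain n) al) -> le_of lt y v).
    { intros y [n ->]. left. apply NNPP. intros h.
      apply N. exists n. exact (wo_le_of_not_lt HW h). }
    destruct (is_sup_exists HW _ Hbound) as [s Hs].
    pose proof (proj1 Hal s (conj (club_chain_next_sup _ Hs) (proj2 Hs v Hbound))) as Hsal.
    destruct (next_in_spec HW al (proj2 (club_chain_club 0))) as [_ [Hal0 _]].
    exact (wo_not_lt_of_le HW Hsal (wo_lt_le_trans HW Hal0 (proj1 Hs _ (ex_intro _ 0 eq_refl)))). }
  destruct Hn as [n Hn]. exists n, al. exact (conj (proj2 (Dal (S n))) (conj Halv Hn)).
Qed.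

End ClubChain.

Section Coloring.
Variable E : T -> T -> Prop.
Hypothesis Eirr : forall x, ~ E x x.

Definition segment_colorable (A : T -> Prop) : Prop :=
  exists a (c : T -> T), (forall x, A x -> lt (c x) a) /\
    (forall x y, A x -> A y -> E x y -> c x <> c y).

Lemma segment_colorable_of_not_chromatic A :
  ~ chromatic_number_is (induced E A) T -> segment_colorable A.
Proof.
  intros Hnot. apply NNPP. intros Hnc. apply Hnot. split.
  - exists (@proj1_sig T A). intros [x Ax] [y Ay] Hxy Heq. simpl in Heq. subst y.
    exact (Eirr Hxy).
  - intros K HK [c Hc]. apply Hnc.
    destruct (card_lt_in_segment HK) as [a [e He]].
    exists a, (fun x => match excluded_middle_informative (A x) with
                        | left p => proj1_sig (e (c (exist _ x p)))
                        | right _ => x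
                        end).
    split.
    + intros x Ax.
      destruct (excluded_middle_informative (A x)) as [p|]; [apply proj2_sig | contradiction].
    + intros x y Ax Ay Exy.
      destruct (excluded_middle_informative (A x)) as [p|]; [|contradiction].
      destruct (excluded_middle_informative (A y)) as [q|]; [|contradiction].
      intros Heq. apply proj1_sig_inj, He in Heq. exact (Hc (exist _ x p) (exist _ y q) Exy Heq).
Qed.

(* Colour v by (0, v) below d and by (n + 1, c_n v) on G n; the bounds a_n and d
   lie below one b0, and nat * [0, b) folds into [0, b). *)
Lemma colorable_of_segment_cover (G : nat -> T -> Prop) d :
  (forall n, segment_colorable (G n)) -> (forall v, lt v d \/ exists n, G n v) ->
  exists b, colorable E {x | lt x b}.
Proof.
  intros HG Hcov.
  destruct (choice _ HG) as [a Ha]. destruct (choice _ Ha) as [c Hc].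
  destruct (succ_cardinal_bounded_seq (fun n => match n with 0 => d | S n => a n end))
    as [b0 Hb0].
  destruct (segment_nat_prod_absorb b0) as [b [Hb [phi Hphi]]].
  assert (Hcol : forall v, exists p : nat * T,
             lt (snd p) b0 /\ (p = (0, v) \/ exists n, G n v /\ p = (S n, c n v))).
  { intros v. destruct (Hcov v) as [Hv|[n Hv]].
    - exists (0, v). split; [exact (wo_trans HW _ _ _ Hv (Hb0 0)) | left; reflexivity].
    - exists (S n, c n v). split; [exact (wo_trans HW _ _ _ (proj1 (Hc n) v Hv) (Hb0 (S n))) |].
      right. eauto. }
  destruct (choice _ Hcol) as [col Hcol'].
  exists b, (fun v => phi (fst (col v), exist (fun x => lt x b) (snd (col v))
                                           (wo_trans HW _ _ _ (proj1 (Hcol' v)) Hb))).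
  intros x y Exy Heq. apply Hphi in Heq. injection Heq as E1 E2.
  destruct (proj2 (Hcol' x)) as [Hx|[n [Gx Hx]]], (proj2 (Hcol' y)) as [Hy|[m [Gy Hy]]];
    rewrite Hx, Hy in *; simpl in *.
  - subst. exact (Eirr Exy).
  - discriminate.
  - discriminate.
  - injection E1 as ->. exact (proj2 (Hc m) x y Gx Gy Exy E2).
Qed.

End Coloring.

End SuccessorCardinal.

Theorem lemma3 (L T : Type) (lt : T -> T -> Prop) (E : T -> T -> Prop) :
  infinite_type L ->
  is_succ_cardinal_of L lt ->
  simple_graph E ->
  chromatic_number_is E T ->
  exists f : T -> T,
    forall C : T -> Prop, club lt C ->
      chromatic_number_is (induced E (interval_union lt f C)) T.
Proof.
  intros Hinf HS [_ Eirr] Hchrom.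
  apply NNPP. intros Nf.
  assert (Hbad : forall f, exists C, club lt C /\ segment_colorable lt E (interval_union lt f C)).
  { intros f. apply NNPP. intros Hgood. apply Nf. exists f. intros C HC.
    apply NNPP. intros Hnot. apply Hgood. exists C.
    exact (conj HC (segment_colorable_of_not_chromatic HS Eirr Hnot)). }
  destruct (choice _ Hbad) as [Cf HCf].
  destruct (club_chain_cover Hinf HS Cf (fun f => proj1 (HCf f))) as [d Hcover].
  destruct (colorable_of_segment_cover Hinf HS Eirr _ _
              (fun n => proj2 (HCf (next_in lt (club_chain lt Cf n)))) Hcover) as [b Hb].
  exact (proj2 Hchrom _ (segment_card_lt HS b) Hb).
Qed.
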